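(* Let $G$ be a finite connected graph and let $2\le k<|V|$. Then the $k$-node CIS relationship graph $G^{(k)}=(C^{(k)},R^{(k)})$ is connected.
   Context: Let $G=(V,E,L)$ be a finite undirected graph with node set $V$, edge set $E$ (unordered pairs of distinct nodes) and a set $L$ of edge labels $l_{i,j}$ attached to edges $(i,j)\in E$ (labels play no role for connectivity). For $V'\subseteq V$, the induced subgraph on $V'$ has node set $V'$ and edge set $\{(i,j)\in E: i,j\in V'\}$ (with the corresponding labels). A $k$-node CIS (connected induced subgraph) is an induced subgraph on a $k$-element set $V'\subseteq V$ that is connected; $C^{(k)}$ denotes the set of all $k$-node CISes of $G$. The $k$-node CIS relationship graph $G^{(k)}=(C^{(k)},R^{(k)})$ is the simple undirected graph whose nodes are the elements of $C^{(k)}$, where two distinct CISes $s_1,s_2\in C^{(k)}$ are adjacent iff their node sets share exactly $k-1$ nodes. *)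

From mathcomp Require Import all_boot.
Set Implicit Arguments. Unset Strict Implicit. Unset Printing Implicit Defensive.

(* A finite simple undirected graph: node type V : finType, edge relation e,
   assumed symmetric and irreflexive (stated as hypotheses of the theorem).
   Edge labels play no role for connectivity and are omitted. *)

Definition induced_rel (V : finType) (e : rel V) (S : {set V}) : rel V :=
  fun x y => [&& x \in S, y \in S & e x y].

Definition graph_connected (V : finType) (e : rel V) : Prop :=
  forall x y : V, connect e x y.

Definition induced_connected (V : finType) (e : rel V) (S : {set V}) : Prop :=
  forall x y, x \in S -> y \in S -> connect (induced_rel e S) x y.

Definition is_CIS (V : finType) (e : rel V) (k : nat) (S : {set V}) : Prop :=
  #|S| = k /\ induced_connected e S.

Definition CIS_rel (V : finType) (e : rel V) (k : nat) : rel {set V} :=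
  fun A B =>
    [&& #|A| == k,
        [forall x, forall y, (x \in A) ==> (y \in A) ==> connect (induced_rel e A) x y],
        #|B| == k,
        [forall x, forall y, (x \in B) ==> (y \in B) ==> connect (induced_rel e B) x y],
        A != B &
        #|A :&: B| == k.-1].

Definition CIS_graph_connected (V : finType) (e : rel V) (k : nat) : Prop :=
  forall A B : {set V}, is_CIS e k A -> is_CIS e k B -> connect (CIS_rel e k) A B.

From mathcomp Require Import all_boot zify.
Set Implicit Arguments. Unset Strict Implicit. Unset Printing Implicit Defensive.

(* The heart of the proof is a "common core" argument: two k-node CISes A
   and B that both contain a nonempty connected set X are joined in G^(k).
   This goes by induction on k - |X|.  If |X| >= k - 1 then A and B share at
   least k - 1 nodes, so they are equal or adjacent.  Otherwise X has a
   neighbour a in A and a neighbour b in B; the connected set X + a + b lies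
   in the connected set A u B and can be grown inside it to a k-node CIS C.
   Then A, C share the larger core X + a, and C, B share X + b. *)

Lemma crossing (T : finType) (r : rel T) (S : {set T}) x y :
  connect r x y -> x \in S -> y \notin S ->
  exists u v, [/\ u \in S, v \notin S & r u v].
Proof.
move=> /connectP [p Hp ->]; elim: p x Hp => [|z p IH] x /=; first by move=> _ ->.
move=> /andP [rxz pz] xS lS; case zS: (z \in S); first exact: IH pz zS lS.
by exists x, z; rewrite zS.
Qed.

Lemma card_setI_lt (T : finType) (A B : {set T}) :
  A != B -> #|A| = #|B| -> #|A :&: B| < #|A|.
Proof.
move=> neAB cAB; rewrite ltn_neqAle subset_leq_card ?subsetIl // andbT.
apply: contra neAB => /eqP cI.
have AB : A \subset B.
  by apply/setIidPl/eqP; rewrite eqEcard subsetIl cI leqnn.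
by rewrite eqEcard AB cAB leqnn.
Qed.

Section InducedConnectivity.

Variables (V : finType) (e : rel V).

Lemma induced_connect_mono (S T : {set V}) x y :
  S \subset T -> connect (induced_rel e S) x y -> connect (induced_rel e T) x y.
Proof.
move=> sST; apply: connect_sub => u v /and3P [uS vS euv]; apply: connect1.
by rewrite /induced_rel (subsetP sST u uS) (subsetP sST v vS).
Qed.

Lemma induced_connectedU (S T : {set V}) z :
  induced_connected e S -> induced_connected e T -> z \in S -> z \in T ->
  induced_connected e (S :|: T).
Proof.
move=> cS cT zS zT.
have via_z x : x \in S :|: T ->
    connect (induced_rel e (S :|: T)) x z /\ connect (induced_rel e (S :|: T)) z x.
  case/setUP => [xS|xT].
  - by split; apply: (induced_connect_mono (subsetUl S T)); apply: cS.
  - by split; apply: (induced_connect_mono (subsetUr S T)); apply: cT.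
move=> x y /via_z [xz _] /via_z [_ zy]; exact: connect_trans xz zy.
Qed.

Hypothesis e_sym : symmetric e.

Lemma induced_connected_edge u v : e u v -> induced_connected e [set u; v].
Proof.
move=> euv x y; rewrite !inE => hx hy.
have uv : induced_rel e [set u; v] u v by rewrite /induced_rel !inE !eqxx orbT.
have vu : induced_rel e [set u; v] v u by rewrite /induced_rel !inE !eqxx orbT e_sym.
case/orP: hx => /eqP ->; case/orP: hy => /eqP ->;
  by rewrite ?connect0 //; apply: connect1.
Qed.

Lemma induced_connected_add (S : {set V}) u v :
  induced_connected e S -> u \in S -> e u v -> induced_connected e (v |: S).
Proof.
move=> cS uS euv.
have -> : v |: S = [set u; v] :|: S.
  by apply/setP => w; rewrite !inE; have [->|_] := eqVneq w u; rewrite ?uS ?orbT.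
by apply: (induced_connectedU (induced_connected_edge euv) cS) uS; rewrite !inE eqxx.
Qed.

Lemma boundary_edge (S X : {set V}) x :
  induced_connected e S -> X \subset S -> x \in X -> #|X| < #|S| ->
  exists u v, [/\ u \in X, v \in S, v \notin X & e u v].
Proof.
move=> cS sXS xX ltXS.
have /subsetPn [y yS yX] : ~~ (S \subset X).
  by apply: contraTN ltXS => /subset_leq_card; rewrite leqNgt.
have [u [v [uX vX /and3P [_ vS euv]]]] := crossing (cS x y (subsetP sXS x xX) yS) xX yX.
by exists u, v.
Qed.

Lemma grow_connected (S X : {set V}) x k :
  induced_connected e S -> induced_connected e X -> X \subset S -> x \in X ->
  #|X| <= k <= #|S| ->
  exists Z : {set V}, [/\ X \subset Z, Z \subset S & is_CIS e k Z].
Proof.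
move=> cS; move Hn: (k - #|X|) => n.
elim: n X Hn => [|n IHn] X Hn cX sXS xX /andP [leXk lekS].
  by exists X; split=> //; split=> //; lia.
have [u [v [uX vS vX euv]]] := boundary_edge cS sXS xX ltac:(lia).
have cardvX : #|v |: X| = #|X|.+1 by rewrite cardsU1 vX.
have [|Z [sZ ZS hZ]] := IHn (v |: X) ltac:(lia) (induced_connected_add cX uX euv)
  ltac:(by rewrite subUset sub1set vS) (setU1r v xX).
  by rewrite cardvX; lia.
by exists Z; split=> //; apply: subset_trans sZ; apply: subsetUr.
Qed.

End InducedConnectivity.

Section CISRelationshipGraph.

Variables (V : finType) (e : rel V) (k : nat).
Hypothesis e_sym : symmetric e.

Let Gk := CIS_rel e k.

Lemma induced_connectedT (S : {set V}) :
  induced_connected e S ->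
  [forall x, forall y, (x \in S) ==> (y \in S) ==> connect (induced_rel e S) x y].
Proof.
move=> cS; apply/forallP => x; apply/forallP => y.
by apply/implyP => xS; apply/implyP => yS; apply: cS.
Qed.

Lemma CIS_large_meet (X A B : {set V}) :
  is_CIS e k A -> is_CIS e k B -> X \subset A -> X \subset B -> k <= #|X|.+1 ->
  connect Gk A B.
Proof.
move=> [kA cA] [kB cB] XA XB hk; have [-> | neAB] := eqVneq A B; first exact: connect0.
have ltAB := card_setI_lt neAB (etrans kA (esym kB)).
have leXAB : #|X| <= #|A :&: B| by apply: subset_leq_card; rewrite subsetI XA XB.
apply: connect1; rewrite /Gk /CIS_rel kA kB !eqxx neAB.
by rewrite !induced_connectedT //=; apply/eqP; lia.
Qed.

Lemma CIS_common_core (X A B : {set V}) x :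
  is_CIS e k A -> is_CIS e k B -> induced_connected e X -> x \in X ->
  X \subset A -> X \subset B -> connect Gk A B.
Proof.
have [n] : exists n, k - #|X| <= n by exists (k - #|X|).
elim: n X A B => [|n IHn] X A B Hn hA hB cX xX XA XB;
  have [hk | hk] := leqP k #|X|.+1.
- exact: (CIS_large_meet hA hB XA XB).
- by lia.
- exact: (CIS_large_meet hA hB XA XB).
have [kA cA] := hA; have [kB cB] := hB.
have [u [a [uX aA aX eua]]] := boundary_edge cA XA xX ltac:(lia).
have [w [b [wX bB bX ewb]]] := boundary_edge cB XB xX ltac:(lia).
(* The connected set X + a + b lies in the connected set A u B. *)
have cXb := induced_connected_add e_sym cX wX ewb.
have cY : induced_connected e (a |: (b |: X)).
  by apply: (induced_connected_add e_sym cXb _ eua); rewrite setU1r.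
have cAB : induced_connected e (A :|: B).
  exact: (induced_connectedU cA cB (subsetP XA x xX) (subsetP XB x xX)).
have [||C [YC _ hC]] :=
  grow_connected (k := k) e_sym cAB cY _ (setU1r a (setU1r b xX)).
- rewrite !subUset !sub1set (subsetP (subsetUl A B) a aA) (subsetP (subsetUr A B) b bB).
  by rewrite (subset_trans XA (subsetUl A B)).
- rewrite !cardsU1 {2}(esym kA) (subset_leq_card (subsetUl A B)) andbT.
  by apply: leq_trans (leq_add (leq_b1 _) (leq_add (leq_b1 _) (leqnn _))) hk.
have XaC : a |: X \subset C by apply: subset_trans YC; apply/setUS/subsetUr.
have XbC : b |: X \subset C by apply: subset_trans YC; apply: subsetUr.
have Hn' : k - #|X|.+1 <= n by move: Hn; clear; lia.
have AC : connect Gk A C.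
  have cXa := induced_connected_add e_sym cX uX eua.
  apply: (IHn (a |: X) A C _ hA hC cXa (setU1r a xX) _ XaC).
  - by rewrite cardsU1 aX.
  - by rewrite subUset sub1set aA XA.
have CB : connect Gk C B.
  apply: (IHn (b |: X) C B _ hC hB cXb (setU1r b xX) XbC).
  - by rewrite cardsU1 bX.
  - by rewrite subUset sub1set bB XB.
exact: connect_trans AC CB.
Qed.

Lemma CIS_shared_node x (A B : {set V}) :
  is_CIS e k A -> is_CIS e k B -> x \in A -> x \in B -> connect Gk A B.
Proof.
move=> hA hB xA xB.
have c1 : induced_connected e [set x].
  by move=> y z; rewrite !inE => /eqP -> /eqP ->; apply: connect0.
by apply: (CIS_common_core hA hB c1 (set11 x)); rewrite sub1set.
Qed.

Hypothesis G_conn : graph_connected e.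
Hypotheses (k_ge2 : 2 <= k) (k_leV : k <= #|V|).

Lemma induced_connected_setT : induced_connected e [set: V].
Proof.
move=> x y _ _; apply: connect_sub (G_conn x y) => u v euv.
by apply: connect1; rewrite /induced_rel !inE.
Qed.

Lemma CIS_through_edge x y :
  e x y -> exists C, [/\ is_CIS e k C, x \in C & y \in C].
Proof.
move=> exy.
have [|C [xyC _ hC]] := grow_connected (k := k) e_sym induced_connected_setT
  (induced_connected_edge e_sym exy) (subsetT _) (set21 x y).
  by rewrite cardsT k_leV cards2 andbT; apply: leq_trans k_ge2; case: (x != y).
by exists C; split=> //; apply: (subsetP xyC); rewrite !inE eqxx ?orbT.
Qed.

Lemma CIS_along_path p x (A B : {set V}) :
  path e x p -> is_CIS e k A -> is_CIS e k B -> x \in A -> last x p \in B ->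
  connect Gk A B.
Proof.
elim: p x A => [|y p IHp] x A /=; first by move=> _; apply: CIS_shared_node.
move=> /andP [exy py] hA hB xA lB.
have [C [hC xC yC]] := CIS_through_edge exy.
exact: connect_trans (CIS_shared_node hA hC xA xC) (IHp y C py hC hB yC lB).
Qed.

End CISRelationshipGraph.

Theorem theorem1 (V : finType) (e : rel V)
  (e_sym : symmetric e) (e_irr : irreflexive e)
  (G_conn : graph_connected e) (k : nat)
  (hk2 : 2 <= k) (hkV : k < #|V|) :
  CIS_graph_connected e k.
Proof.
move=> A B hA hB.
have /card_gt0P [a aA] : 0 < #|A| by case: hA => -> _; apply: ltnW.
have /card_gt0P [b bB] : 0 < #|B| by case: hB => -> _; apply: ltnW.
have [p pab lb] := connectP (G_conn a b).
rewrite lb in bB.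
exact: (CIS_along_path e_sym G_conn hk2 (ltnW hkV) pab hA hB aA bB).
Qed.
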